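(* Let $N$ be finite, $\mathbf P$ stochastic on $N$, $0<\beta<1$, $\mathbf R\in\mathbb R^N$, $S\subseteq N$ and $\nu\in\mathbb{R}$. The stopping rule $\tau_S$ (continue while in $S$, stop upon first entering $S^c$) is optimal for the problem $\max_\tau\{f_i^\tau-\nu g_i^\tau\}$ over all stopping rules $\tau$, simultaneously for every initial state $i\in N$, if and only if $$\max\{\nu_j^S: j\in S^c\}\le\nu\le\min\{\nu_j^S: j\in S\},$$ with the conventions $\max\emptyset=-\infty$, $\min\emptyset=+\infty$.
   Context: $N$ is a finite state set, $\mathbf{P}=(p_{ij})$ stochastic, $\beta\in(0,1)$, $\mathbf R=(R_j)$; $X(t)$ the Markov chain with matrix $\mathbf P$, $\mathsf E_i$ expectation given $X(0)=i$, $S^c=N\setminus S$. Stopping rules are (possibly randomized) stopping times in $\{0,1,\dots\}\cup\{\infty\}$; $f_i^\tau=\mathsf{E}_i[\sum_{t=0}^{\tau-1}R_{X(t)}\beta^t]$, $g_i^\tau=\mathsf{E}_i[\sum_{t=0}^{\tau-1}\beta^t]$. For $S\subseteq N$, $\tau_S=\min\{t\ge0:X(t)\notin S\}$, $f_i^S=f_i^{\tau_S}$, $g_i^S=g_i^{\tau_S}$, $w_i^S=1+\beta\sum_jp_{ij}g_j^S-\beta g_i^S$ (which is positive), $r_i^S=R_i+\beta\sum_jp_{ij}f_j^S-\beta f_i^S$, and the marginal productivity rate is $\nu_i^S=r_i^S/w_i^S$. *)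

From HB Require Import structures.
From mathcomp Require Import all_boot all_order all_algebra.
From mathcomp Require Import all_classical all_reals all_analysis.
Set Implicit Arguments. Unset Strict Implicit. Unset Printing Implicit Defensive.
Import Order.TTheory GRing.Theory Num.Theory.
Import numFieldNormedType.Exports.
Local Open Scope ring_scope.

Section Defs.
Variables (R : realType) (N : finType).

Definition stochastic (P : N -> N -> R) : Prop :=
  (forall i j, 0 <= P i j) /\ (forall i, \sum_(j : N) P i j = 1).

(* A (possibly randomized) stopping rule: given the observed history
   h = [:: X(0); ...; X(t)] (and not having stopped before), stop at time t
   with probability sigma h. *)
Definition stopping_rule (sigma : seq N -> R) : Prop :=
  forall h, 0 <= sigma h <= 1.

Definition path_prob (P : N -> N -> R) (i : N) (t : nat) (h : t.+1.-tuple N) : R :=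
  (thead h == i)%:R * \prod_(s < t) P (nth i h s) (nth i h s.+1).

(* probability of not having stopped at times 0..t along h, i.e. of {tau > t} *)
Definition survive (sigma : seq N -> R) (t : nat) (h : t.+1.-tuple N) : R :=
  \prod_(s < t.+1) (1 - sigma (take s.+1 h)).

(* E_i[ r(X(t)) 1{tau > t} ] *)
Definition stage_term (P : N -> N -> R) (sigma : seq N -> R) (r : N -> R)
  (i : N) (t : nat) : R :=
  \sum_(h : t.+1.-tuple N) path_prob P i h * survive sigma h * r (nth i h t).

(* E_i[ sum_{t=0}^{tau-1} r(X(t)) beta^t ] *)
Definition disc_value (P : N -> N -> R) (beta : R) (sigma : seq N -> R)
  (r : N -> R) (i : N) : R :=
  limn (series (fun t => beta ^+ t * stage_term P sigma r i t)).

Definition f_val P beta (Rw : N -> R) sigma i := disc_value P beta sigma Rw i.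
Definition g_val P beta sigma i := disc_value P beta sigma (fun _ => 1) i.

Definition tau_S (S : {set N}) : seq N -> R :=
  fun h => if h is x :: h' then (last x h' \notin S)%:R else 0.

Definition fS P beta Rw S i := f_val P beta Rw (tau_S S) i.
Definition gS P beta S i := g_val P beta (tau_S S) i.

Definition wS P beta S i : R :=
  1 + beta * \sum_(j : N) P i j * gS P beta S j - beta * gS P beta S i.
Definition rS P beta Rw S i : R :=
  Rw i + beta * \sum_(j : N) P i j * fS P beta Rw S j - beta * fS P beta Rw S i.
Definition nuS P beta Rw S i : R := rS P beta Rw S i / wS P beta S i.

End Defs.
Arguments tau_S {R N} S _.

(* The objective f - nu g is the discounted value of the net reward R - nu.
   1. First-step analysis of the path-sum definition of stage_term yields, for
      every (randomized, history-dependent) stopping rule, the Bellman-type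
      equation  V(i) = (1 - sigma[i]) (c(i) + beta sum_j P_ij V'(j)),  where V'
      is the value of the shifted rule; the series converge geometrically.
   2. For tau_S this reads V^S(j) = 1{j in S} C(j), where C(j) is the value of
      one step followed by tau_S (the continuation value).  The numerators of
      nu^S_j are (1 - beta 1{j in S}) C(j), so nu^S_j = C_R(j) / C_1(j) and the
      comparison of nu with nu^S_j is the sign of the net continuation value.
   3. tau_S is optimal iff C <= 0 off S and C >= 0 on S: necessity by the
      deviations "stop now" and "continue once"; sufficiency because V^S is
      then a nonnegative supersolution, which dominates every rule's value. *)

From HB Require Import structures.
From mathcomp Require Import all_boot all_order all_algebra.
From mathcomp Require Import all_classical all_reals all_analysis.
From mathcomp Require Import ring lra.
Import Order.TTheory GRing.Theory Num.Theory.
Import numFieldNormedType.Exports.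
Local Open Scope ring_scope.

Set Implicit Arguments. Unset Strict Implicit. Unset Printing Implicit Defensive.

Section Tuples.
Variables (V : nmodType) (T : finType).

Lemma nth_tuple_default t (h : t.+1.-tuple T) a b s :
  (s <= t)%N -> nth a h s = nth b h s.
Proof. by move=> st; apply: set_nth_default; rewrite size_tuple ltnS. Qed.

Lemma sum_tuple0 (F : 0.-tuple T -> V) : \sum_(h : 0.-tuple T) F h = F [tuple].
Proof. by rewrite (big_pred1 [tuple]) // => h; apply/esym/eqP; exact: tuple0. Qed.

Lemma sum_tupleS n (F : n.+1.-tuple T -> V) :
  \sum_(h : n.+1.-tuple T) F h = \sum_(x : T) \sum_(h : n.-tuple T) F [tuple of x :: h].
Proof.
rewrite pair_big /= (reindex (fun p : T * n.-tuple T => [tuple of p.1 :: p.2])) //=.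
exists (fun h : n.+1.-tuple T => (thead h, [tuple of behead h])).
  by move=> [x h] _ /=; rewrite theadE; congr pair; exact: val_inj.
by move=> h _ /=; rewrite -tuple_eta.
Qed.

End Tuples.

Section FirstStep.
Variables (R : realType) (N : finType) (P : N -> N -> R).

Definition shift_rule (sigma : seq N -> R) (x : N) : seq N -> R :=
  fun h => sigma (x :: h).

Lemma sum_indicator (F : N -> R) (a : N) : \sum_(x : N) (x == a)%:R * F x = F a.
Proof.
rewrite (bigD1 a) //= eqxx mul1r big1 ?addr0 // => x /negbTE ->.
by rewrite mul0r.
Qed.

Lemma path_prob_head t (h : t.+1.-tuple N) j :
  path_prob P j h = (thead h == j)%:R * path_prob P (thead h) h.
Proof.
have [<-|ne] := eqVneq (thead h) j; first by rewrite mul1r.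
by rewrite /path_prob (negbTE ne) !mul0r.
Qed.

Lemma path_prob_cons i t x (h : t.+1.-tuple N) :
  path_prob P i [tuple of x :: h] =
  (x == i)%:R * (P x (thead h) * path_prob P (thead h) h).
Proof.
rewrite /path_prob theadE big_ord_recl /= eqxx mul1r.
congr (_ * (_ * _)); first by rewrite /thead (tnth_nth i).
apply: eq_bigr => s _; rewrite add0n /bump leq0n add1n.
by rewrite !(nth_tuple_default _ i (thead h) (ltnW (ltn_ord s)))
           !(nth_tuple_default _ i (thead h) (ltn_ord s)).
Qed.

Lemma survive_cons sigma t x (h : t.+1.-tuple N) :
  survive sigma [tuple of x :: h] =
  (1 - sigma [:: x]) * survive (shift_rule sigma x) h.
Proof. by rewrite /survive big_ord_recl /= take0. Qed.

Lemma stage_term0 sigma r i : stage_term P sigma r i 0 = (1 - sigma [:: i]) * r i.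
Proof.
rewrite /stage_term sum_tupleS -(sum_indicator (fun x => (1 - sigma [:: x]) * r x)).
apply: eq_bigr => x _; rewrite sum_tuple0 /path_prob /survive theadE.
by rewrite big_ord0 big_ord1 /= mulr1 mulrA.
Qed.

Lemma stage_termS sigma r i t : stage_term P sigma r i t.+1 =
  (1 - sigma [:: i]) *
    \sum_(j : N) P i j * stage_term P (shift_rule sigma i) r j t.
Proof.
have first_move x : \sum_(h : t.+1.-tuple N) path_prob P i [tuple of x :: h] *
      survive sigma [tuple of x :: h] * r (nth i [tuple of x :: h] t.+1) =
    (x == i)%:R * ((1 - sigma [:: x]) * \sum_(h : t.+1.-tuple N)
      P x (thead h) * path_prob P (thead h) h * survive (shift_rule sigma x) h *
      r (nth i h t)).
  by rewrite !mulr_sumr; apply: eq_bigr => h _; rewrite path_prob_cons survive_cons /=; ring.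
rewrite /stage_term sum_tupleS (eq_bigr _ (fun x _ => first_move x)) sum_indicator.
congr (_ * _).
under [RHS]eq_bigr do rewrite mulr_sumr.
rewrite [RHS]exchange_big /=; apply: eq_bigr => h _.
rewrite (eq_bigr (fun j => (j == thead h)%:R * (P i j * (path_prob P (thead h) h *
  survive (shift_rule sigma i) h * r (nth i h t))))); first by rewrite sum_indicator; ring.
by move=> j _; rewrite path_prob_head eq_sym (nth_tuple_default _ j i (leqnn t)); ring.
Qed.

End FirstStep.

Section DiscountedValue.
Variables (R : realType) (N : finType) (P : N -> N -> R) (beta : R).
Hypotheses (hP : stochastic P) (hbeta : 0 < beta < 1).
Local Notation SR := (@stopping_rule R N).

Let beta_ge0 : 0 <= beta. Proof. by case/andP: hbeta => /ltW. Qed.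

Lemma shift_stopping_rule sigma x : SR sigma -> SR (shift_rule sigma x).
Proof. by move=> hs h; apply: hs. Qed.

Lemma continue_prob01 sigma h : SR sigma -> 0 <= 1 - sigma h <= 1.
Proof. by move=> /(_ h) /andP [? ?]; apply/andP; split; lra. Qed.

Lemma stage_term_ext t : forall (s1 s2 : seq N -> R) r i,
  (forall x h, s1 (x :: h) = s2 (x :: h)) ->
  stage_term P s1 r i t = stage_term P s2 r i t.
Proof.
elim: t => [|t IH] s1 s2 r i e; first by rewrite !stage_term0 e.
rewrite !stage_termS e; congr (_ * _); apply: eq_bigr => j _; congr (_ * _).
by apply: IH => x h; exact: e.
Qed.

Lemma stage_term_lin sigma r1 r2 nu i t :
  stage_term P sigma (fun x => r1 x - nu * r2 x) i t =
  stage_term P sigma r1 i t - nu * stage_term P sigma r2 i t.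
Proof.
by rewrite /stage_term mulr_sumr -sumrB; apply: eq_bigr => h _; ring.
Qed.

Lemma stage_term_bound t : forall sigma (r : N -> R) i (M : R), SR sigma ->
  (forall x, `|r x| <= M) -> `|stage_term P sigma r i t| <= M.
Proof.
elim: t => [|t IH] sigma r i M hs hr;
  have /andP [c0 c1] := continue_prob01 [:: i] hs.
  rewrite stage_term0 normrM (ger0_norm c0).
  by apply: le_trans (hr i); rewrite ler_piMl.
have M0 : 0 <= M := le_trans (normr_ge0 _) (hr i).
rewrite stage_termS normrM (ger0_norm c0).
apply: le_trans (_ : (1 - sigma [:: i]) * M <= M); last by rewrite ler_piMl.
apply: ler_wpM2l => //; apply: le_trans (ler_norm_sum _ _ _) _.
apply: le_trans (_ : \sum_(j : N) P i j * M <= M); last first.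
  by rewrite -mulr_suml (proj2 hP) mul1r.
apply: ler_sum => j _; rewrite normrM ger0_norm ?(proj1 hP) //.
by apply: ler_wpM2l; [exact: (proj1 hP) | apply: IH => //; exact: shift_stopping_rule].
Qed.

Lemma stage_term_ge0 t : forall sigma (r : N -> R) i, SR sigma ->
  (forall x, 0 <= r x) -> 0 <= stage_term P sigma r i t.
Proof.
elim: t => [|t IH] sigma r i hs hr;
  have /andP [c0 _] := continue_prob01 [:: i] hs.
  by rewrite stage_term0 mulr_ge0.
rewrite stage_termS mulr_ge0 // sumr_ge0 // => j _.
by rewrite mulr_ge0 ?(proj1 hP) // IH //; exact: shift_stopping_rule.
Qed.

Definition partial_value sigma r i := series (fun t => beta ^+ t * stage_term P sigma r i t).

Lemma partial_valueS sigma r i n : partial_value sigma r i n.+1 =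
  (1 - sigma [:: i]) *
    (r i + beta * \sum_(j : N) P i j * partial_value (shift_rule sigma i) r j n).
Proof.
rewrite /partial_value /series /= big_nat_recl // expr0 mul1r stage_term0.
rewrite mulrDr; congr (_ + _); rewrite !mulr_sumr.
under [RHS]eq_bigr do rewrite !mulr_sumr.
rewrite [RHS]exchange_big /=; apply: eq_bigr => k _.
rewrite stage_termS exprS !mulr_sumr; apply: eq_bigr => j _; ring.
Qed.

(* Stage terms are bounded, so the series is dominated by a geometric one. *)
Lemma partial_value_cvg sigma r i : SR sigma -> cvgn (partial_value sigma r i).
Proof.
move=> hs; apply: normed_cvg.
pose M := \sum_(x : N) `|r x|.
have hr x : `|r x| <= M by rewrite /M (bigD1 x) //= lerDl sumr_ge0.
apply: (@series_le_cvg _ _ (geometric M beta)) => [n|n|n|].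
- exact: normr_ge0.
- by rewrite /geometric /= mulr_ge0 ?exprn_ge0 ?sumr_ge0.
- rewrite /geometric /= normrM normrX ger0_norm // mulrC.
  by apply: ler_wpM2r; [exact: exprn_ge0 | exact: stage_term_bound].
- by apply: is_cvg_geometric_series; rewrite ger0_norm //; case/andP: hbeta.
Qed.

Local Notation V sigma r i := (disc_value P beta sigma r i).

Lemma disc_value_step sigma r i : SR sigma -> V sigma r i =
  (1 - sigma [:: i]) * (r i + beta * \sum_(j : N) P i j * V (shift_rule sigma i) r j).
Proof.
move=> hs; apply: cvg_lim => //; rewrite -/(partial_value _ _ _) -cvg_shiftS.
under eq_cvg do rewrite /= partial_valueS.
apply: cvgMl_tmp; apply: cvgD; first exact: cvg_cst.
apply: cvgMl_tmp; apply: cvg_big => // [|j _]; first exact: add_continuous.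
by apply: cvgMl_tmp; apply: partial_value_cvg; exact: shift_stopping_rule.
Qed.

Lemma disc_value_lin sigma (r1 r2 : N -> R) (nu : R) i : SR sigma ->
  V sigma (fun x => r1 x - nu * r2 x) i = V sigma r1 i - nu * V sigma r2 i.
Proof.
move=> hs; apply: cvg_lim => //; rewrite -!/(partial_value _ _ _).
have -> : partial_value sigma (fun x => r1 x - nu * r2 x) i =
    fun n => partial_value sigma r1 i n - nu * partial_value sigma r2 i n.
  apply: funext => n; rewrite /partial_value /series /= mulr_sumr -sumrB.
  by apply: eq_bigr => k _; rewrite stage_term_lin; ring.
by apply: cvgB; [|apply: cvgMl_tmp]; exact: partial_value_cvg.
Qed.

Lemma disc_value_ext s1 s2 r i :
  (forall x h, s1 (x :: h) = s2 (x :: h)) -> V s1 r i = V s2 r i.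
Proof.
move=> e; rewrite /disc_value; congr (limn (series _)).
by apply: funext => t; rewrite (stage_term_ext _ _ _ e).
Qed.

Lemma disc_value_ge0 sigma r i : SR sigma -> (forall x, 0 <= r x) -> 0 <= V sigma r i.
Proof.
move=> hs hr; apply: limr_ge; first exact: partial_value_cvg.
apply: nearW => n; apply: sumr_ge0 => k _.
by rewrite mulr_ge0 ?exprn_ge0 ?stage_term_ge0.
Qed.

(* Verification lemma: a nonnegative W with c + beta P W <= W dominates the
   discounted value of every stopping rule (stopping yields 0 <= W, continuing
   yields at most c + beta P W <= W); induction on the partial sums. *)
Lemma disc_value_le_supersolution (W c : N -> R) :
  (forall j, 0 <= W j) ->
  (forall j, c j + beta * \sum_(k : N) P j k * W k <= W j) ->
  forall sigma i, SR sigma -> V sigma c i <= W i.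
Proof.
move=> W0 Wsup.
suff bound n sigma i : SR sigma -> partial_value sigma c i n <= W i.
  move=> sigma i hs; apply: limr_le; first exact: partial_value_cvg.
  by apply: nearW => n; exact: bound.
elim: n sigma i => [|n IH] sigma i hs.
  by rewrite /partial_value /series /= big_geq.
rewrite partial_valueS; have /andP [c0 c1] := continue_prob01 [:: i] hs.
apply: le_trans (_ : (1 - sigma [:: i]) * (c i + beta * \sum_(k : N) P i k * W k) <= W i).
  apply: ler_wpM2l => //; rewrite lerD2l; apply: ler_wpM2l => //.
  apply: ler_sum => k _; apply: ler_wpM2l; first exact: (proj1 hP).
  by apply: IH; exact: shift_stopping_rule.
by have := Wsup i; have := W0 i; nra.
Qed.

Lemma net_value (Rw : N -> R) (nu : R) sigma i : SR sigma ->
  f_val P beta Rw sigma i - nu * g_val P beta sigma i = V sigma (fun x => Rw x - nu) i.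
Proof.
move=> hs; rewrite /f_val /g_val -disc_value_lin //.
by congr disc_value; apply: funext => x; rewrite mulr1.
Qed.

End DiscountedValue.

Section StationaryRule.
Variables (R : realType) (N : finType) (P : N -> N -> R) (beta : R) (S : {set N}).
Hypotheses (hP : stochastic P) (hbeta : 0 < beta < 1).
Local Notation V sigma r i := (disc_value P beta sigma r i).
Local Notation tS := (@tau_S R N S).

Lemma tau_S_stopping_rule : stopping_rule tS.
Proof. by case=> [|x h] /=; [lra | case: (_ \notin S) => /=; lra]. Qed.

Lemma tau_S_continue j : 1 - tS [:: j] = (j \in S)%:R.
Proof. by rewrite /= -[j \in S]negbK; case: (j \notin S) => /=; rewrite ?subrr ?subr0. Qed.

Definition continuation_value (r : N -> R) j : R :=
  r j + beta * \sum_(k : N) P j k * V tS r k.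

Lemma tau_S_value r j : V tS r j = (j \in S)%:R * continuation_value r j.
Proof.
rewrite disc_value_step //; last exact: tau_S_stopping_rule.
rewrite tau_S_continue; congr (_ * (_ + _ * _)).
by apply: eq_bigr => k _; congr (_ * _); apply: disc_value_ext.
Qed.

Lemma continuation_value_net (Rw : N -> R) (nu : R) j :
  continuation_value (fun x => Rw x - nu) j =
  continuation_value Rw j - nu * continuation_value (fun=> 1) j.
Proof.
have Vnet k : V tS (fun x => Rw x - nu) k = V tS Rw k - nu * V tS (fun=> 1) k.
  by rewrite -net_value //; exact: tau_S_stopping_rule.
rewrite /continuation_value.
have -> : \sum_(k : N) P j k * V tS (fun x => Rw x - nu) k =
    \sum_(k : N) P j k * V tS Rw k - nu * \sum_(k : N) P j k * V tS (fun=> 1) k.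
  by rewrite mulr_sumr -sumrB; apply: eq_bigr => k _; rewrite Vnet; ring.
ring.
Qed.

Lemma continuation_value_one_gt0 j : 0 < continuation_value (fun=> 1) j.
Proof.
have b0 : 0 <= beta by case/andP: hbeta => /ltW.
rewrite /continuation_value ltr_pwDl // mulr_ge0 // sumr_ge0 // => k _.
rewrite mulr_ge0 ?(proj1 hP) // disc_value_ge0 //; exact: tau_S_stopping_rule.
Qed.

(* Numerators r^S and w^S of the marginal productivity rate, via the
   continuation value: both carry the same positive factor 1 - beta 1{j in S}. *)
Lemma marginal_reward_continuation (r : N -> R) j :
  r j + beta * \sum_(k : N) P j k * V tS r k - beta * V tS r j =
  (1 - beta * (j \in S)%:R) * continuation_value r j.
Proof. by rewrite tau_S_value /continuation_value; ring. Qed.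

Lemma nuS_continuation (Rw : N -> R) j :
  nuS P beta Rw S j = continuation_value Rw j / continuation_value (fun=> 1) j.
Proof.
rewrite /nuS /rS /wS /fS /gS /f_val /g_val.
rewrite (marginal_reward_continuation Rw) (marginal_reward_continuation (fun=> 1)).
have k_gt0 : 0 < 1 - beta * (j \in S)%:R.
  by case/andP: hbeta => ? ?; case: (j \in S) => /=; lra.
by rewrite invfM mulrACA divff ?mul1r // gt_eqF.
Qed.

Lemma nuS_le_iff (Rw : N -> R) (nu : R) j :
  (nuS P beta Rw S j <= nu) = (continuation_value (fun x => Rw x - nu) j <= 0).
Proof.
by rewrite nuS_continuation continuation_value_net
  ler_pdivrMr ?continuation_value_one_gt0 // subr_le0.
Qed.

Lemma nuS_ge_iff (Rw : N -> R) (nu : R) j :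
  (nu <= nuS P beta Rw S j) = (0 <= continuation_value (fun x => Rw x - nu) j).
Proof.
by rewrite nuS_continuation continuation_value_net
  ler_pdivlMr ?continuation_value_one_gt0 // subr_ge0.
Qed.

Definition tau_S_optimal (c : N -> R) : Prop :=
  forall sigma, stopping_rule sigma -> forall i, V sigma c i <= V tS c i.

Definition stop_now : seq N -> R := fun=> 1.
Definition continue_once : seq N -> R := fun h => if h is [:: _] then 0 else tS h.

Lemma stop_now_rule : stopping_rule stop_now.
Proof. by move=> h; rewrite /stop_now ler01 lexx. Qed.

Lemma continue_once_rule : stopping_rule continue_once.
Proof. by case=> [|x [|y h]]; try exact: tau_S_stopping_rule; rewrite /= lexx ler01. Qed.

Lemma stop_now_value c i : V stop_now c i = 0.
Proof. by rewrite disc_value_step ?subrr ?mul0r //; exact: stop_now_rule. Qed.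

Lemma continue_once_value c j : V continue_once c j = continuation_value c j.
Proof.
rewrite disc_value_step //; last exact: continue_once_rule.
rewrite subr0 mul1r; congr (_ + _ * _).
by apply: eq_bigr => k _; congr (_ * _); apply: disc_value_ext.
Qed.

Lemma tau_S_optimal_iff (c : N -> R) : tau_S_optimal c <->
  ((forall j, j \notin S -> continuation_value c j <= 0) /\
   (forall j, j \in S -> 0 <= continuation_value c j)).
Proof.
split => [opt | [neg pos] sigma hs i].
  split => j hj.
    have := opt continue_once continue_once_rule j.
    by rewrite continue_once_value tau_S_value (negbTE hj) mul0r.
  have := opt stop_now stop_now_rule j.
  by rewrite stop_now_value tau_S_value hj mul1r.
apply: disc_value_le_supersolution => // j; rewrite [V tS c j]tau_S_value.
  by case: (boolP (j \in S)) => hj; rewrite ?mul1r ?mul0r ?pos.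
by case: (boolP (j \in S)) => hj; rewrite ?mul1r ?mul0r ?neg.
Qed.

End StationaryRule.

Unset Implicit Arguments. Set Strict Implicit.

Theorem proposition4 (R : realType) (N : finType) (P : N -> N -> R) (beta : R)
  (Rw : N -> R) (S : {set N}) (nu : R) :
  stochastic P -> 0 < beta < 1 ->
  ((forall (sigma : seq N -> R), stopping_rule sigma ->
      forall i : N,
        f_val P beta Rw sigma i - nu * g_val P beta sigma i
        <= f_val P beta Rw (tau_S S) i - nu * g_val P beta (tau_S S) i)
   <->
   ((forall j, j \notin S -> nuS P beta Rw S j <= nu) /\
    (forall j, j \in S -> nu <= nuS P beta Rw S j))).
Proof.
move=> hP hbeta.
have objective_net : (forall sigma, stopping_rule sigma -> forall i,
    f_val P beta Rw sigma i - nu * g_val P beta sigma i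
    <= f_val P beta Rw (tau_S S) i - nu * g_val P beta (tau_S S) i) <->
  tau_S_optimal P beta S (fun x => Rw x - nu).
  split=> opt sigma hs i; have := opt sigma hs i;
    by rewrite !net_value //; exact: tau_S_stopping_rule.
rewrite objective_net tau_S_optimal_iff //.
split=> -[neg pos]; split=> j hj.
- by rewrite nuS_le_iff //; exact: neg.
- by rewrite nuS_ge_iff //; exact: pos.
- by rewrite -nuS_le_iff //; exact: neg.
- by rewrite -nuS_ge_iff //; exact: pos.
Qed.
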